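(* Let $G$ be a topological groupoid and $Z$ a topological space with a right action of $G$ (momentum map $p\colon Z\to G^{(0)}$). Consider: (i) $G$ acts properly on $Z$; (ii) $(r,s)\colon Z\rtimes G\to Z\times Z$, $(z,g)\mapsto(z,zg)$, is closed and for every $z\in Z$ the stabilizer $\{g\in G: p(z)=r(g), zg=z\}$ is quasi-compact; (iii) for all quasi-compact $K,L\subset Z$, $\{g\in G: Lg\cap K\neq\emptyset\}$ is quasi-compact; (iii)' for all compact $K,L\subset Z$, $\{g\in G: Lg\cap K\neq\emptyset\}$ is quasi-compact; (iv) for every quasi-compact $K\subset Z$, $\{g\in G: Kg\cap K\neq\emptyset\}$ is quasi-compact; (v) there is a family $(A_i)_{i\in I}$ of subsets of $Z$ with $Z=\bigcup_i\mathrm{int}(A_i)$ such that $\{g\in G: A_ig\cap A_j\neq\emptyset\}$ is relatively quasi-compact for all $i,j\in I$. Then (i)$\iff$(ii)$\implies$(iii)$\implies$(iii)' and (iii)$\implies$(iv). If $Z$ is locally compact, then (iii)'$\implies$(v) and (iv)$\implies$(v). If $G^{(0)}$ is Hausdorff and $Z$ is locally compact Hausdorff, then (i)–(v) are all equivalent.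
   Context: Quasi-compact: every open cover has a finite subcover; compact: quasi-compact Hausdorff; locally compact: every point has a compact neighbourhood. A subset is relatively quasi-compact if contained in a quasi-compact subset. A continuous map is proper if closed with quasi-compact fibres; a groupoid is proper if $(r,s)$ onto unit space squared is proper. A right action: $zg$ defined when $p(z)=r(g)$, with $p(zg)=s(g)$. $Z\rtimes G=\{(z,g)\in Z\times G: p(z)=r(g)\}$ is a groupoid with unit space $Z$, range $(z,g)\mapsto z$, source $(z,g)\mapsto zg$. The action is proper if $Z\rtimes G$ is a proper groupoid. $Lg=\{zg: z\in L, p(z)=r(g)\}$. *)

From HB Require Import structures.
From mathcomp Require Import all_boot all_order all_algebra.
From mathcomp Require Import all_classical all_reals all_analysis.
Set Implicit Arguments. Unset Strict Implicit. Unset Printing Implicit Defensive.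
Local Open Scope classical_set_scope.

(* NB: mathcomp-analysis' [compact A] is filter-based quasi-compactness
   (no Hausdorff condition), i.e. the paper's "quasi-compact". *)

(* Paper's "compact": quasi-compact and Hausdorff (in the subspace topology). *)
Definition compact_set {T : topologicalType} (K : set T) : Prop :=
  compact K /\
  forall x y, K x -> K y -> x <> y ->
    exists U V : set T, [/\ open U, open V, U x, V y & U `&` V `&` K = set0].

Definition loc_compact (T : topologicalType) : Prop :=
  forall x : T, exists N : set T, nbhs x N /\ compact_set N.

Definition rel_quasi_compact {T : topologicalType} (S : set T) : Prop :=
  exists C : set T, compact C /\ S `<=` C.

(* A map defined on a subset D (with the subspace topology) is closed:
   relatively closed subsets of D are exactly D `&` C with C closed. *)
Definition closed_map_on {T U : topologicalType} (D : set T) (f : T -> U) : Prop :=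
  forall C : set T, closed C -> closed (f @` (D `&` C)).

Definition proper_map_on {T U : topologicalType} (D : set T) (f : T -> U) : Prop :=
  closed_map_on D f /\ forall y : U, compact (D `&` f @^-1` [set y]).

(* Topological groupoid with arrow space G and unit space X; the unit
   inclusion is [unit : X -> G] (a homeomorphism onto its image, since
   [rg \o unit = id]); multiplication [mul g h] is meaningful when
   [sg g = rg h]. *)
Record topGroupoid (G X : topologicalType) := TopGroupoid {
  rg : G -> X;
  sg : G -> X;
  unit : X -> G;
  mul : G -> G -> G;
  inv : G -> G;
  rg_unit : forall x, rg (unit x) = x;
  sg_unit : forall x, sg (unit x) = x;
  rg_mul : forall g h, sg g = rg h -> rg (mul g h) = rg g;
  sg_mul : forall g h, sg g = rg h -> sg (mul g h) = sg h;
  mulA : forall g h k, sg g = rg h -> sg h = rg k ->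
           mul (mul g h) k = mul g (mul h k);
  mul_unitl : forall g, mul (unit (rg g)) g = g;
  mul_unitr : forall g, mul g (unit (sg g)) = g;
  rg_inv : forall g, rg (inv g) = sg g;
  sg_inv : forall g, sg (inv g) = rg g;
  mulV : forall g, mul g (inv g) = unit (rg g);
  mulVl : forall g, mul (inv g) g = unit (sg g);
  rg_cont : continuous rg;
  sg_cont : continuous sg;
  unit_cont : continuous unit;
  inv_cont : continuous inv;
  mul_cont : {within [set gh : G * G | sg gh.1 = rg gh.2],
                continuous (fun gh : G * G => mul gh.1 gh.2)}
}.

(* Continuous right action of a topological groupoid on a space Z,
   with momentum map [mom]; [act z g] = zg, meaningful when mom z = rg g. *)
Record rightAction (G X : topologicalType) (Gd : topGroupoid G X)
    (Z : topologicalType) := RightAction {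
  mom : Z -> X;
  act : Z -> G -> Z;
  mom_act : forall z g, mom z = rg Gd g -> mom (act z g) = sg Gd g;
  act_unit : forall z, act z (unit Gd (mom z)) = z;
  act_mul : forall z g h, mom z = rg Gd g -> sg Gd g = rg Gd h ->
              act (act z g) h = act z (mul Gd g h);
  mom_cont : continuous mom;
  act_cont : {within [set zg : Z * G | mom zg.1 = rg Gd zg.2],
                continuous (fun zg : Z * G => act zg.1 zg.2)}
}.

Section Conditions.
Context {G X Z : topologicalType} {Gd : topGroupoid G X} (A : rightAction Gd Z).

(* arrows space of the transformation groupoid Z ⋊ G, as a subspace of Z × G *)
Definition trans_arrows : set (Z * G) :=
  [set zg | mom A zg.1 = rg Gd zg.2].

Definition trans_rs (zg : Z * G) : Z * Z := (zg.1, act A zg.1 zg.2).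

(* (i): the action is proper, i.e. Z ⋊ G is a proper groupoid:
   (r,s) : Z ⋊ G -> (Z ⋊ G)^(0) × (Z ⋊ G)^(0) = Z × Z is proper. *)
Definition proper_action : Prop := proper_map_on trans_arrows trans_rs.

Definition stabilizer (z : Z) : set G :=
  [set g | mom A z = rg Gd g /\ act A z g = z].

Definition transporter (L K : set Z) : set G :=
  [set g | exists z, [/\ L z, mom A z = rg Gd g & K (act A z g)]].

Definition cond_ii : Prop :=
  closed_map_on trans_arrows trans_rs /\ forall z, compact (stabilizer z).

Definition cond_iii : Prop :=
  forall K L : set Z, compact K -> compact L -> compact (transporter L K).

Definition cond_iii' : Prop :=
  forall K L : set Z, compact_set K -> compact_set L -> compact (transporter L K).

Definition cond_iv : Prop :=
  forall K : set Z, compact K -> compact (transporter K K).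

Definition cond_v : Prop :=
  exists (I : Type) (As : I -> set Z),
    \bigcup_(i in [set: I]) interior (As i) = [set: Z] /\
    forall i j, rel_quasi_compact (transporter (As i) (As j)).

End Conditions.

(* Everything rests on the ultrafilter description of proper maps: f is proper
   on D iff every ultrafilter on D whose image converges to w converges to a
   point of the fibre over w.  The fibre of (r,s) over (z, z g0) is the right
   translate by g0 of the stabilizer of z, so (i) <-> (ii); transporters are
   projections of preimages of L x K, so (i) -> (iii).  Conversely, under (v)
   an ultrafilter on Z x| G whose image converges to (w1, w2) eventually has
   its arrows in a relatively quasi-compact transporter A_i -> A_j, hence
   converges; Hausdorffness of G^(0) and of Z puts the limit in Z x| G and in
   the fibre over (w1, w2). *)

From Pilot Require Import Defs.
From mathcomp Require Import all_boot all_order all_algebra.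
From mathcomp Require Import all_classical all_reals all_analysis.
Local Open Scope classical_set_scope.

Section UltraProper.
Context {T U : topologicalType}.

Lemma fmap_ultra_filter {F : set_system T} (f : T -> U) :
  UltraFilter F -> UltraFilter (f @ F).
Proof.
move=> FU; split; first exact: fmap_proper_filter.
move=> G GF sFG; apply/seteqP; split=> B GB; last exact: sFG.
have [//|FnB] := in_ultra_setVsetC (f @^-1` B) FU.
have : G (B `&` ~` B) by apply: filterI => //; exact: sFG.
by rewrite setICr => /filter_ex [].
Qed.

Lemma cvg_within_continuous {F : set_system T} {FF : Filter F} {D : set T}
    {f : T -> U} {y : T} :
  {within D, continuous f} -> D y -> F D -> F --> y -> f @ F --> f y.
Proof.
move=> /subspace_continuousP fc Dy FD Fy; apply: cvg_trans (fc y Dy).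
by move=> B /Fy FB; apply: filterS (filterI FD FB) => x [Dx Bx]; exact: Bx.
Qed.

Lemma cvg_unique_on (f g : T -> U) {F : set_system T} {FF : ProperFilter F}
    {D : set T} {a b : U} :
  hausdorff_space U -> F D -> (forall x, D x -> f x = g x) ->
  f @ F --> a -> g @ F --> b -> a = b.
Proof.
move=> hU FD fg fa gb; apply: (cvg_unique hU (F := f @ F) fa) => B /gb FB.
have FgB : F (g @^-1` B) := FB.
suff : F (f @^-1` B) by [].
by apply: filterS (filterI FD FgB) => x [Dx Bx]; rewrite /= fg.
Qed.

Definition ultra_liftable (D : set T) (f : T -> U) :=
  forall F, UltraFilter F -> F D -> forall w, f @ F --> w ->
    exists y, [/\ D y, f y = w & F --> y].

(* The traces on the fibre over w of the closures of the members of F form a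
   proper filter base because f is closed; a cluster point of this base in the
   quasi-compact fibre is a cluster point, hence a limit, of the ultrafilter
   F. *)
Lemma proper_map_on_ultra_liftable D f :
  proper_map_on D f -> ultra_liftable D f.
Proof.
case=> f_closed f_fibre F FU FD w Fw.
pose fibre := D `&` f @^-1` [set w].
pose G := filter_from F (fun E => fibre `&` closure E).
have GF : ProperFilter G.
  apply: filter_from_proper.
    apply: filter_from_filter; first by exists setT; exact: filterT.
    move=> E1 E2 FE1 FE2; exists (E1 `&` E2); first exact: filterI.
    move=> p [fp cp]; split; split=> //; apply: closureS cp => ? []//.
  move=> E FE.
  have : closure (f @` (D `&` closure E)) w.
    move=> B /Fw FB.
    have /filter_ex [p [[Dp Ep] Bfp]] : F (D `&` E `&` f @^-1` B).
      by apply: filterI => //; exact: filterI.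
    exists (f p); split => //; exists p => //; split => //.
    exact: subset_closure.
  move: (f_closed _ (@closed_closure _ E)) => /closure_id <-.
  by case=> p [Dp cEp] fpw; exists p.
have Gfibre : G fibre by exists setT; [exact: filterT | move=> ? []].
have [y [[Dy fyw] Gy]] := f_fibre w G GF Gfibre.
have Fy : cluster F y.
  move=> E B FE /nbhs_interior By.
  have GE : G (fibre `&` closure E) by exists E.
  have [q [[_ cEq] Bq]] := Gy _ _ GE By.
  exact: cEq Bq.
by exists y; split => //; move: Fy; rewrite ultra_cvg_clusterE.
Qed.

Lemma ultra_liftable_compact_preimage D f K : ultra_liftable D f ->
  compact K -> compact (D `&` f @^-1` K).
Proof.
rewrite !compact_ultra /= => fD Kc F FU FDK.
have FD : F D by apply: filterS FDK => ? [].
have FK : F (f @^-1` K) by apply: filterS FDK => ? [].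
have [w [Kw Fw]] := Kc (f @ F) (fmap_ultra_filter f FU) FK.
have [y [Dy fyw Fy]] := fD F FU FD w Fw.
by exists y; split => //; split => //=; rewrite fyw.
Qed.

Lemma ultra_liftable_closed_map_on D f :
  ultra_liftable D f -> closed_map_on D f.
Proof.
move=> fD C Ccl w cw.
pose F0 := filter_from (nbhs w) (fun B => D `&` C `&` f @^-1` B).
have F0F : ProperFilter F0.
  apply: filter_from_proper.
    apply: filter_from_filter; first by exists setT; exact: filterT.
    move=> B1 B2 N1 N2; exists (B1 `&` B2); first exact: filterI.
    by move=> p [[Dp Cp] [B1p B2p]]; split; split.
  move=> B /cw [x [[p [Dp Cp] fpx] Bx]].
  by exists p; split => //; rewrite /= fpx.
have [F [FU F0F']] := ultraFilterLemma F0F.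
have FDC : F (D `&` C).
  by apply: F0F'; exists setT; [exact: filterT | move=> ? []].
have Fw : f @ F --> w by move=> B Bw; apply: F0F'; exists B => // ? [].
have [y [Dy fyw Fy]] := fD F FU (filterS (@subIsetl _ D C) FDC) w Fw.
exists y => //; split => //; apply: Ccl => B /Fy FB.
by have [p [[_ Cp] Bp]] := filter_ex (filterI FDC FB); exists p.
Qed.

Lemma ultra_liftable_proper_map_on D f :
  ultra_liftable D f -> proper_map_on D f.
Proof.
move=> fD; split; first exact: ultra_liftable_closed_map_on.
by move=> w; apply: ultra_liftable_compact_preimage => //; exact: compact_set1.
Qed.

End UltraProper.

Lemma groupoid_mulr_continuous {G X : topologicalType} (Gd : topGroupoid G X)
    (g0 : G) :
  {within [set h | sg Gd h = rg Gd g0], continuous (fun h => Defs.mul Gd h g0)}.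
Proof.
apply/subspace_continuousP => h hg0.
have mc := (subspace_continuousP _ _).1 (@Defs.mul_cont _ _ Gd) (h, g0) hg0.
apply: cvg_trans mc.
move=> P [[N1 N2] [/= N1h N2g0] sub].
apply: filterS N1h => k N1k k_g0.
exact: (sub (k, g0) (conj N1k (nbhs_singleton N2g0)) k_g0).
Qed.

Section TransformationGroupoid.
Context {G X Z : topologicalType} {Gd : topGroupoid G X} (A : rightAction Gd Z).
Local Notation D := (trans_arrows A).
Local Notation rs := (trans_rs A).

Lemma stabilizerE z : stabilizer A z = snd @` (D `&` rs @^-1` [set (z, z)]).
Proof.
apply/seteqP; split => [g [zg gz]|_ [[z' g] [Dzg [<- gz]] <-]]; last by split.
by exists (z, g) => //; split => //; rewrite /trans_rs /= gz.
Qed.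

Lemma compact_stabilizer z : proper_action A -> compact (stabilizer A z).
Proof.
move=> [_ rs_fibre]; rewrite stabilizerE.
apply: continuous_compact (rs_fibre (z, z)).
by apply: continuous_subspaceT => p; exact: cvg_snd.
Qed.

Lemma trans_rs_fibreE z g0 : mom A z = rg Gd g0 ->
  D `&` rs @^-1` [set (z, act A z g0)] =
  (fun h => (z, Defs.mul Gd h g0)) @` stabilizer A z.
Proof.
move=> zg0; have sg0 := mom_act zg0.
apply/seteqP; split => [[z' g] [zg [z'z gw]]|_ [h [zh hz] <-]].
  subst z'; have sgg : sg Gd g = sg Gd g0 by rewrite -sg0 -(mom_act zg) gw.
  exists (Defs.mul Gd g (Defs.inv Gd g0)).
    split; first by rewrite Defs.rg_mul // Defs.rg_inv.
    rewrite -act_mul ?Defs.rg_inv // gw act_mul ?Defs.rg_inv //.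
    by rewrite Defs.mulV -zg0 act_unit.
  rewrite Defs.mulA ?Defs.sg_inv ?Defs.rg_inv //.
  by rewrite Defs.mulVl -sgg Defs.mul_unitr.
have hg0 : sg Gd h = rg Gd g0 by rewrite -(mom_act zh) hz.
split; first by rewrite /trans_arrows /= Defs.rg_mul.
by rewrite /trans_rs /= -act_mul // hz.
Qed.

Lemma compact_trans_rs_fibre : (forall z, compact (stabilizer A z)) ->
  forall w, compact (D `&` rs @^-1` [set w]).
Proof.
move=> stab_compact [z w].
have [[g0 [zg0 <-]]|no_arrow] :=
  pselect (exists g0, mom A z = rg Gd g0 /\ act A z g0 = w); last first.
  suff -> : D `&` rs @^-1` [set (z, w)] = set0 by exact: compact0.
  apply/seteqP; split => // [[z' g]] [zg [z'z gw]]; subst z'.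
  by apply: no_arrow; exists g.
rewrite trans_rs_fibreE //; apply: continuous_compact (stab_compact z).
apply: (@continuous_subspaceW _ _ _ [set h | sg Gd h = rg Gd g0]).
  by move=> h [zh hz] /=; rewrite -(mom_act zh) hz.
move=> h; apply: cvg_pair; first exact: cvg_cst.
exact: groupoid_mulr_continuous.
Qed.

Lemma proper_actionP : proper_action A <-> cond_ii A.
Proof.
split=> [prop|[closed_rs stab_compact]].
  by split; [exact: prop.1 | move=> z; exact: compact_stabilizer].
by split => //; exact: compact_trans_rs_fibre.
Qed.

Lemma transporterE L K : transporter A L K = snd @` (D `&` rs @^-1` (L `*` K)).
Proof.
apply/seteqP; split => [g [z [Lz zg Kzg]]|_ [[z g] [zg [Lz Kzg]] <-]].
  by exists (z, g).
by exists z.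
Qed.

Lemma transporterS L L' K K' : L `<=` L' -> K `<=` K' ->
  transporter A L K `<=` transporter A L' K'.
Proof. by move=> LL' KK' g [z [Lz zg Kzg]]; exists z; split; auto. Qed.

Lemma proper_action_transporter : proper_action A -> cond_iii A.
Proof.
move=> /proper_map_on_ultra_liftable rs_lift K L Kc Lc; rewrite transporterE.
apply: continuous_compact.
  by apply: continuous_subspaceT => p; exact: cvg_snd.
by apply: ultra_liftable_compact_preimage => //; exact: compact_setX.
Qed.

Lemma trans_rs_ultra_liftable : hausdorff_space X -> hausdorff_space Z ->
  cond_v A -> ultra_liftable D rs.
Proof.
move=> hX hZ [I [As [cover transp_rqc]]] F FU FD [w1 w2] Fw.
have F1 : fst @ F --> w1 by apply: cvg_trans (cvg_app fst Fw) _; exact: cvg_fst.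
have F2 : (fun zg => act A zg.1 zg.2) @ F --> w2.
  by apply: cvg_trans (cvg_app snd Fw) _; exact: cvg_snd.
have [i _ w1i] : (\bigcup_(i in setT) interior (As i)) w1 by rewrite cover.
have [j _ w2j] : (\bigcup_(i in setT) interior (As i)) w2 by rewrite cover.
have [C [Cc transpC]] := transp_rqc i j.
have FC : F (snd @^-1` C).
  have Fi : F (fst @^-1` As i) := F1 _ w1i.
  have Fj : F ((fun zg => act A zg.1 zg.2) @^-1` As j) := F2 _ w2j.
  apply: filterS (filterI FD (filterI Fi Fj)) => -[z g] [zg [zi gj]].
  by apply: transpC; exists z.
move: Cc; rewrite compact_ultra.
move=> /(_ _ (fmap_ultra_filter snd FU) FC) [g [_ Fg]].
have Fy : F --> (w1, g).
  move=> P /(cvg_pair F1 Fg) FP.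
  have FP1 : F [set x | P (x.1, x.2)] := FP.
  by apply: filterS FP1 => -[].
have w1g : D (w1, g).
  apply: (cvg_unique_on (fun zg => mom A zg.1) (fun zg => rg Gd zg.2) hX FD).
  - by [].
  - exact: cvg_comp F1 (@mom_cont _ _ _ _ A w1).
  - exact: cvg_comp Fg (@rg_cont _ _ Gd g).
exists (w1, g); split => //; congr (_, _).
apply: (cvg_unique hZ (F := (fun zg => act A zg.1 zg.2) @ F)) F2.
exact: cvg_within_continuous (@act_cont _ _ _ _ A) w1g FD Fy.
Qed.

Lemma proper_action_of_cond_v : hausdorff_space X -> hausdorff_space Z ->
  cond_v A -> proper_action A.
Proof.
move=> hX hZ v; apply: ultra_liftable_proper_map_on.
exact: trans_rs_ultra_liftable.
Qed.

Lemma cond_iii'_of_iii : cond_iii A -> cond_iii' A.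
Proof. by move=> iii K L [Kc _] [Lc _]; exact: iii. Qed.

Lemma cond_iv_of_iii : cond_iii A -> cond_iv A.
Proof. by move=> iii K Kc; exact: iii. Qed.

Lemma cond_v_of_compact_nbhs : loc_compact Z ->
  (forall N M, compact_set N -> compact_set M ->
     rel_quasi_compact (transporter A N M)) ->
  cond_v A.
Proof.
move=> lcZ transp_rqc.
pose N z := projT1 (cid (lcZ z)).
have [N_nbhs N_compact] :
    (forall z, nbhs z (N z)) /\ (forall z, compact_set (N z)).
  by split => z; case: (projT2 (cid (lcZ z))).
exists Z, N; split; last by move=> i j; exact: transp_rqc.
by apply/seteqP; split => // z _; exists z => //; exact: N_nbhs.
Qed.

Lemma cond_v_of_iii' : loc_compact Z -> cond_iii' A -> cond_v A.
Proof.
move=> lcZ iii'; apply: cond_v_of_compact_nbhs => // N M Nc Mc.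
by exists (transporter A N M); split => //; exact: iii'.
Qed.

Lemma cond_v_of_iv : loc_compact Z -> cond_iv A -> cond_v A.
Proof.
move=> lcZ iv; apply: cond_v_of_compact_nbhs => // N M [Nc _] [Mc _].
exists (transporter A (N `|` M) (N `|` M)); split.
  by apply: iv; exact: compactU.
by apply: transporterS => ? ?; [left | right].
Qed.

End TransformationGroupoid.

Theorem proposition2p14 (G X Z : topologicalType) (Gd : topGroupoid G X)
    (A : rightAction Gd Z) :
  [/\ (proper_action A <-> cond_ii A),
      (cond_ii A -> cond_iii A),
      (cond_iii A -> cond_iii' A),
      (cond_iii A -> cond_iv A)
    & (loc_compact Z -> (cond_iii' A -> cond_v A) /\ (cond_iv A -> cond_v A))] /\
  (hausdorff_space X -> hausdorff_space Z -> loc_compact Z ->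
        [/\ (proper_action A <-> cond_iii A), (proper_action A <-> cond_iii' A),
            (proper_action A <-> cond_iv A) & (proper_action A <-> cond_v A)]).
Proof.
have i_iii := proper_action_transporter A.
have iii_iii' := cond_iii'_of_iii A.
have iii_iv := cond_iv_of_iii A.
split.
  split=> [|/proper_actionP /i_iii //| | |] //; first exact: proper_actionP.
  by move=> lcZ; split; [exact: cond_v_of_iii' | exact: cond_v_of_iv].
move=> hX hZ lcZ; have v_i := proper_action_of_cond_v A hX hZ.
have iii'_v := cond_v_of_iii' A lcZ; have iv_v := cond_v_of_iv A lcZ.
split; split.
- exact: i_iii.
- by move=> /iii_iii' /iii'_v /v_i.
- by move=> /i_iii /iii_iii'.
- by move=> /iii'_v /v_i.
- by move=> /i_iii /iii_iv.
- by move=> /iv_v /v_i.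
- by move=> /i_iii /iii_iii' /iii'_v.
- exact: v_i.
Qed.
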